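(* Let $(I,\preceq)$ be a finite poset with $|I|=n$. For each $i\in I$ let $X_i$ be a finite set with $|X_i|\geq 2$, and let $P_i=(p_i(x_i,y_i))_{x_i,y_i\in X_i}$ be an arbitrary Markov chain (stochastic matrix) on $X_i$. Let $\{p_i^0\}_{i\in I}$ be a strict probability measure on $I$, and let $\mathcal{P}$ be the generalized crested product of the $P_i$ defined by $(I,\preceq)$ and $\{p_i^0\}$. Let $R\subseteq I$, and let $\mathcal{L}=\{L_1,\ldots,L_t\}$ be the partition of $X=\prod_{i\in I}X_i$ into the classes of the equivalence relation $x\sim y \iff x_i=y_i$ for all $i\in I\setminus R$. Then $\mathcal{P}$ is lumpable with respect to $\mathcal{L}$, i.e. for all $k,s\in\{1,\ldots,t\}$ the function $x\mapsto \mathcal{P}(x,L_s)=\sum_{y\in L_s}p(x,y)$ is constant on $L_k$.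
   Context: For $i\in I$, $H(i)=\{j\in I: j\prec i\}$ and $H[i]=H(i)\sqcup\{i\}$. A strict probability measure on $I$ means $p_i^0>0$ for all $i$ and $\sum_i p_i^0=1$. The generalized crested product is the Markov chain on $X=\prod_{i\in I}X_i$ with transition probabilities $$p(x,y)=\sum_{i\in I}p_i^0\,p_i(x_i,y_i)\prod_{j\in H(i)}\frac{1}{|X_j|}\prod_{j\notin H[i]}\delta(x_j,y_j),$$ where $\delta$ is the Kronecker delta; equivalently its operator is $\sum_{i\in I}p_i^0\,P_i\otimes(\bigotimes_{j\in H(i)}U_j)\otimes(\bigotimes_{j\notin H[i]}I_j)$ with $U_j$ the uniform operator (all entries $1/|X_j|$) and $I_j$ the identity on $X_j$. A Markov chain with transition matrix $p$ on a finite set $X$ is lumpable with respect to a partition $\{L_1,\dots,L_t\}$ of $X$ if for all $k,s$ the map $x\mapsto\sum_{y\in L_s}p(x,y)$ is constant on $L_k$. *)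

From HB Require Import structures.
From mathcomp Require Import all_boot all_order all_algebra.
Set Implicit Arguments. Unset Strict Implicit. Unset Printing Implicit Defensive.
Import Order.TTheory GRing.Theory Num.Theory.
Local Open Scope ring_scope.
Local Open Scope order_scope.

Definition stochastic (K : numDomainType) (S : finType) (P : S -> S -> K) :=
  (forall x y, 0 <= P x y) /\ (forall x, \sum_(y : S) P x y = 1).

Definition strict_prob (K : numDomainType) (I : finType) (p0 : I -> K) :=
  (forall i, 0 < p0 i) /\ \sum_(i : I) p0 i = 1.

Definition crested_product (K : fieldType) (d : Order.disp_t)
  (I : finPOrderType d) (X : I -> finType)
  (P : forall i, X i -> X i -> K) (p0 : I -> K)
  (x y : {dffun forall i, X i}) : K :=
  \sum_(i : I) (p0 i * P i (x i) (y i)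
     * \prod_(j : I | (j < i)%O) (#|X j|%:R)^-1
     * \prod_(j : I | ~~ (j <= i)%O) (x j == y j)%:R).

Definition lumpable (K : numDomainType) (T : finType) (p : T -> T -> K)
  (L : {set {set T}}) :=
  forall Lk Ls, Lk \in L -> Ls \in L ->
  forall x x', x \in Lk -> x' \in Lk ->
    \sum_(y in Ls) p x y = \sum_(y in Ls) p x' y.

Definition agree_off (I : finType) (X : I -> finType) (R : {set I})
  (x y : {dffun forall i, X i}) : bool :=
  [forall i, (i \notin R) ==> (x i == y i)].

From HB Require Import structures.
From mathcomp Require Import all_boot all_order all_algebra.
Import Order.TTheory GRing.Theory Num.Theory.
Local Open Scope ring_scope.
Set Implicit Arguments. Unset Printing Implicit Defensive.

(* Each summand of the crested product is a scalar multiple of a product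
   kernel [x, y |-> \prod_j M_j (x j) (y j)] with M_i = P_i, M_j constant
   for j < i and M_j the identity otherwise.  A lumping class is a product
   set (a singleton in the coordinates outside R, everything in those of R),
   so summing a product kernel over it gives \prod_j \sum_(v in class_j)
   M_j (x j) v.  The factors with j outside R only see x j, which is
   constant on a class; those with j in R are full row sums, independent of
   x j because every M_j has constant row sums. *)

Section DependentProducts.

Context {R : comPzSemiRingType} {I : finType} {T_ : I -> finType}.

Lemma sum_dffun_prod (F : forall i, T_ i -> R) :
  \sum_(y : {dffun forall i, T_ i}) \prod_i F i (y i) =
  \prod_i \sum_(v : T_ i) F i v.
Proof.
rewrite (reindex (@dffun_of_fprod I T_)); last exact/onW_bij/dffun_of_fprod_bij.
under eq_bigr do under eq_bigr do rewrite ffunE -[F _ _](ffunE (F _)).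
rewrite (big_fprod _ _ (fun i => finfun (F i))).
have tag_sum i : \sum_(v : T_ i) F i v =
    \sum_(j in tagged_with T_ i) untag 0 [ffun v => F i v] j.
  by rewrite -(big_tag (fun i => finfun (F i))); apply: eq_bigr => v _; rewrite ffunE.
by under [RHS]eq_bigr do rewrite tag_sum; rewrite bigA_distr_big_dep.
Qed.

Lemma sum_setXn_prod (A : forall i, {set T_ i}) (F : forall i, T_ i -> R) :
  \sum_(y in setXn A) \prod_i F i (y i) = \prod_i \sum_(v in A i) F i v.
Proof.
under [RHS]eq_bigr do rewrite big_mkcond /=.
rewrite -sum_dffun_prod big_mkcond /=; apply: eq_bigr => y _.
rewrite in_setXn; have [yA | /forallPn [i yiA]] := boolP [forall i, y i \in A i].
  by apply: eq_bigr => i _; rewrite (forallP yA i).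
by rewrite (bigD1 i) //= (negbTE yiA) mul0r.
Qed.

End DependentProducts.

Section ProductKernels.

Context {K : comPzSemiRingType} {I : finType} {X : I -> finType}.
Context {R : {set I}}.
Implicit Types x y z : {dffun forall i, X i}.

Definition agree_box z j : {set X j} := if j \in R then setT else [set z j].

Lemma agree_offE z y : agree_off R z y = (y \in setXn (agree_box z)).
Proof.
rewrite in_setXn; apply: eq_forallb => j.
by rewrite /agree_box; case: (j \in R); rewrite !inE // eq_sym.
Qed.

Lemma agree_offP {x y j} : agree_off R x y -> j \notin R -> x j = y j.
Proof. by move=> /forallP/(_ j)/implyP xy /xy/eqP. Qed.

Lemma agree_off_eucl w x x' :
  agree_off R w x -> agree_off R w x' -> agree_off R x x'.
Proof.
move=> wx wx'; apply/forallP => j; apply/implyP => jR.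
by rewrite -(agree_offP wx jR) (agree_offP wx' jR).
Qed.

Lemma agree_off_sum_prod_kernel (M : forall j, X j -> X j -> K) z {x x'} :
    (forall j, j \in R -> forall a b, \sum_v M j a v = \sum_v M j b v) ->
    agree_off R x x' ->
  \sum_(y | agree_off R z y) \prod_j M j (x j) (y j) =
  \sum_(y | agree_off R z y) \prod_j M j (x' j) (y j).
Proof.
move=> rowM xx'; rewrite !(eq_bigl _ _ (agree_offE z)).
rewrite (sum_setXn_prod _ (fun j => M j (x j))).
rewrite (sum_setXn_prod _ (fun j => M j (x' j))).
apply: eq_bigr => j _; rewrite /agree_box.
have [jR | jNR] := boolP (j \in R); last by rewrite (agree_offP xx' jNR).
under eq_bigl do rewrite in_setT; under [RHS]eq_bigl do rewrite in_setT.
exact: rowM.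
Qed.

End ProductKernels.

Section CrestedProduct.

Context {K : fieldType} {d : Order.disp_t} {I : finPOrderType d}.
Context {X : I -> finType}.
Variables (P : forall i, X i -> X i -> K) (p0 : I -> K).

Definition crested_kernel (i : I) : forall j, X j -> X j -> K :=
  dfwith (fun j (a b : X j) => if (j <= i)%O then 1 else (a == b)%:R) (P i).

Lemma crested_productE x y :
  crested_product P p0 x y =
  \sum_i p0 i * \prod_(j | (j < i)%O) (#|X j|%:R)^-1 *
         \prod_j crested_kernel i j (x j) (y j).
Proof.
apply: eq_bigr => i _; rewrite -!mulrA; congr (_ * _); rewrite mulrCA; congr (_ * _).
rewrite [RHS](bigD1 i) //= /crested_kernel dfwith_in; congr (_ * _).
rewrite [RHS](eq_bigr (fun j => if ~~ (j <= i)%O then (x j == y j)%:R else 1)).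
  rewrite -big_mkcondr; apply: eq_bigl => j.
  by rewrite andb_idl // => ji; apply: contraNneq ji => ->.
by move=> j ji; rewrite dfwith_out 1?eq_sym //; case: (j <= i)%O.
Qed.

Lemma crested_kernel_row_sum_const :
    (forall i (a b : X i), \sum_v P i a v = \sum_v P i b v) ->
  forall i j (a b : X j),
    \sum_v crested_kernel i j a v = \sum_v crested_kernel i j b v.
Proof.
move=> rowP i j; rewrite /crested_kernel; case: dfwithP => [|{}j _] a b //.
case: (j <= i)%O => //.
have one_hot (c : X j) : \sum_v (c == v)%:R = 1 :> K.
  by rewrite (bigD1 c) //= eqxx big1 ?addr0 // => v; rewrite eq_sym => /negbTE ->.
by rewrite !one_hot.
Qed.

End CrestedProduct.

Theorem theorem3 (K : realFieldType) (d : Order.disp_t) (I : finPOrderType d)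
  (X : I -> finType) (hX : forall i, (1 < #|X i|)%N)
  (P : forall i, X i -> X i -> K) (hP : forall i, stochastic (P i))
  (p0 : I -> K) (hp0 : strict_prob p0) (R : {set I}) :
  lumpable (crested_product P p0)
    (equivalence_partition (agree_off R) [set: {dffun forall i, X i}]).
Proof.
move=> _ _ /imsetP[w _ ->] /imsetP[z _ ->] x x'; rewrite !inE /= => wx wx'.
have rowP i (a b : X i) : \sum_v P i a v = \sum_v P i b v by rewrite !(hP i).2.
rewrite !(eq_bigl (agree_off R z)) => [|y|y]; try by rewrite !inE.
under eq_bigr do rewrite crested_productE; under [RHS]eq_bigr do rewrite crested_productE.
rewrite exchange_big [RHS]exchange_big; apply: eq_bigr => i _ /=.
rewrite -!big_distrr /=; congr (_ * _).
apply: (agree_off_sum_prod_kernel (crested_kernel P i) z); last exact: agree_off_eucl wx wx'.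
by move=> j _; apply: crested_kernel_row_sum_const.
Qed.
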